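(* (1) Invariance: if $t\to_w u$ then $t\equiv^{typ} u$. (2) Compatibility: if $t\equiv^{typ}u$ then $C\langle t\rangle\equiv^{typ} C\langle u\rangle$ for every context $C$.
   Context: Terms: $t ::= x \mid \lambda x.t \mid t\,u \mid t[x\backslash u]$ ($t[x\backslash u]$ an explicit substitution binding $x$ in $t$; terms up to $\alpha$). Values $v ::= \lambda x.t$. Substitution contexts $S ::= \langle\cdot\rangle\mid S[x\backslash u]$. Weak contexts $W ::= \langle\cdot\rangle \mid W\,t \mid t\,W \mid t[x\backslash W] \mid W[x\backslash u]$; $W\langle\langle t\rangle\rangle$ is plugging without capture of free variables of $t$. Root rules: $S\langle\lambda x.t\rangle u\mapsto_m S\langle t[x\backslash u]\rangle$; $W\langle\langle x\rangle\rangle[x\backslash u]\mapsto_e W\langle\langle u\rangle\rangle[x\backslash u]$; $t[x\backslash S\langle v\rangle]\mapsto_{gcv} S\langle t\rangle$ if $x\notin\mathrm{fv}(t)$. $\to_w$ is the union of their closures under weak contexts. A context $C$ is a term with exactly one hole, anywhere (also under abstraction or inside ESs). Silly multi types: linear types $L ::= \mathtt{n} \mid M\multimap L$; multi types $M ::= [L_i]_{i\in I}$ finite multisets ($\mathbf{0}$ empty, $\uplus$ sum). Type contexts $\Gamma$ map variables to multi types with finite support; $\uplus$ pointwise; $\Gamma\setminus\!\!\setminus x$ sets $x$ to $\mathbf{0}$. Rules: (ax) $x:[L]\vdash^{(0,1)} x:L$; (many) from $(\Gamma_i\vdash^{(m_i,e_i)} t : L_i)_{i\in I}$, $I$ finite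 possibly empty, infer $\uplus_i\Gamma_i\vdash^{(\sum m_i,\sum e_i)} t : [L_i]_{i\in I}$; ($\mathrm{ax}_\lambda$) $\vdash^{(0,0)}\lambda x.t:\mathtt{n}$; ($\lambda$) from $\Gamma\vdash^{(m,e)}t:L$ infer $\Gamma\setminus\!\!\setminus x\vdash^{(m,e)}\lambda x.t:\Gamma(x)\multimap L$; (@) from $\Gamma\vdash^{(m,e)} t : M\multimap L$ and $\Delta\vdash^{(m',e')} u : M\uplus[\mathtt{n}]$ infer $\Gamma\uplus\Delta\vdash^{(m+m'+1,e+e')} tu : L$; (ES) from $\Gamma\vdash^{(m,e)} t:L$ and $\Delta\vdash^{(m',e')}u:\Gamma(x)\uplus[\mathtt{n}]$ infer $(\Gamma\setminus\!\!\setminus x)\uplus\Delta\vdash^{(m+m',e+e')} t[x\backslash u]:L$. Type equivalence: $t\equiv^{typ}u$ iff for all $\Gamma$ and linear types $L$, $\Gamma\vdash t:L$ is derivable iff $\Gamma\vdash u:L$ is derivable (indices ignored). *)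

From Stdlib Require Import List Arith.
Import ListNotations.

(* ES t u  represents  t[x\u]; x is de Bruijn index 0 in t (bound by the ES),
   u lives in the outer scope. *)
Inductive term : Type :=
| Var (n : nat)
| Lam (t : term)
| App (t u : term)
| ES  (t u : term).

Definition uprn (r : nat -> nat) : nat -> nat :=
  fun n => match n with 0 => 0 | S m => S (r m) end.

Fixpoint ren (r : nat -> nat) (t : term) : term :=
  match t with
  | Var n => Var (r n)
  | Lam t => Lam (ren (uprn r) t)
  | App t u => App (ren r t) (ren r u)
  | ES t u => ES (ren (uprn r) t) (ren r u)
  end.

Definition lift (k : nat) (t : term) : term := ren (fun i => i + k) t.

Fixpoint occurs (n : nat) (t : term) : bool :=
  match t with
  | Var m => Nat.eqb n m
  | Lam t => occurs (S n) t
  | App t u => occurs n t || occurs n u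
  | ES t u => occurs (S n) t || occurs n u
  end.

Definition is_value (t : term) : Prop := exists b, t = Lam b.

(* list head = outermost ES:  splug (u :: S) t = (splug S t)[x\u] *)
Fixpoint splug (S : list term) (t : term) : term :=
  match S with
  | [] => t
  | u :: S' => ES (splug S' t) u
  end.

Inductive wctx : Type :=
| WHole
| WAppL (W : wctx) (t : term)
| WAppR (t : term) (W : wctx)
| WESR  (t : term) (W : wctx)
| WESL  (W : wctx) (u : term).

Fixpoint wplug (W : wctx) (s : term) : term :=
  match W with
  | WHole => s
  | WAppL W t => App (wplug W s) t
  | WAppR t W => App t (wplug W s)
  | WESR t W => ES t (wplug W s)
  | WESL W u => ES (wplug W s) u
  end.

(* number of binders of W above its hole *)
Fixpoint wdepth (W : wctx) : nat :=
  match W with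
  | WHole => 0
  | WAppL W _ | WAppR _ W | WESR _ W => wdepth W
  | WESL W _ => S (wdepth W)
  end.

Inductive root : term -> term -> Prop :=
(* S<lam x.t> u  |->m  S<t[x\u]> *)
| root_m (Sc : list term) (t u : term) :
    root (App (splug Sc (Lam t)) u) (splug Sc (ES t (lift (length Sc) u)))
(* W<<x>>[x\u]  |->e  W<<u>>[x\u]  (no capture by W) *)
| root_e (W : wctx) (u : term) :
    root (ES (wplug W (Var (wdepth W))) u)
         (ES (wplug W (lift (S (wdepth W)) u)) u)
(* t[x\S<v>]  |->gcv  S<t>  if x notin fv(t) *)
| root_gcv (t : term) (Sc : list term) (v : term) :
    is_value v -> occurs 0 t = false ->
    root (ES t (splug Sc v)) (splug Sc (ren (fun i => pred i + length Sc) t)).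

Inductive wstep : term -> term -> Prop :=
| wstep_ctx (W : wctx) (t u : term) : root t u -> wstep (wplug W t) (wplug W u).

Inductive cctx : Type :=
| CHole
| CLam  (C : cctx)
| CAppL (C : cctx) (t : term)
| CAppR (t : term) (C : cctx)
| CESL  (C : cctx) (u : term)
| CESR  (t : term) (C : cctx).

(* plugging may capture (de Bruijn: plain syntactic plugging) *)
Fixpoint cplug (C : cctx) (s : term) : term :=
  match C with
  | CHole => s
  | CLam C => Lam (cplug C s)
  | CAppL C t => App (cplug C s) t
  | CAppR t C => App t (cplug C s)
  | CESL C u => ES (cplug C s) u
  | CESR t C => ES t (cplug C s)
  end.

(* Multi types are finite multisets, represented by lists taken up to
   permutation (recursively, see ty_eq / m_eq). *)
Inductive lty : Type :=
| TN
| TArr (M : list lty) (L : lty).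

Definition mty := list lty.

Inductive ty_eq : lty -> lty -> Prop :=
| teq_n : ty_eq TN TN
| teq_arr M M' L L' : m_eq M M' -> ty_eq L L' -> ty_eq (TArr M L) (TArr M' L')
with m_eq : mty -> mty -> Prop :=
| meq_nil : m_eq [] []
| meq_cons L L' M M' : ty_eq L L' -> m_eq M M' -> m_eq (L :: M) (L' :: M')
| meq_swap L1 L2 M : m_eq (L1 :: L2 :: M) (L2 :: L1 :: M)
| meq_trans M1 M2 M3 : m_eq M1 M2 -> m_eq M2 M3 -> m_eq M1 M3.

Definition tctx := nat -> mty.
Definition cempty : tctx := fun _ => [].
Definition csum (G D : tctx) : tctx := fun x => G x ++ D x.
Definition csingle (x : nat) (M : mty) : tctx :=
  fun y => if Nat.eqb y x then M else [].
(* G \\ x for the binder x = index 0, then leaving its scope *)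
Definition ctail (G : tctx) : tctx := fun n => G (S n).
Definition ctx_eq (G G' : tctx) : Prop := forall x, m_eq (G x) (G' x).

(* Typing judgments (indices (m,e) omitted: type equivalence ignores them).
   The conv rules express that contexts and types are multisets. *)
Inductive tyL : tctx -> term -> lty -> Prop :=
| ty_ax x L : tyL (csingle x [L]) (Var x) L
| ty_axlam t : tyL cempty (Lam t) TN
| ty_lam G t L : tyL G t L -> tyL (ctail G) (Lam t) (TArr (G 0) L)
| ty_app G D t u M L :
    tyL G t (TArr M L) -> tyM D u (M ++ [TN]) -> tyL (csum G D) (App t u) L
| ty_es G D t u L :
    tyL G t L -> tyM D u (G 0 ++ [TN]) -> tyL (csum (ctail G) D) (ES t u) L
| ty_convL G G' t L L' : tyL G t L -> ctx_eq G G' -> ty_eq L L' -> tyL G' t L'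
with tyM : tctx -> term -> mty -> Prop :=
| tym_nil t : tyM cempty t []
| tym_cons G D t L M : tyL G t L -> tyM D t M -> tyM (csum G D) t (L :: M)
| ty_convM G G' t M M' : tyM G t M -> ctx_eq G G' -> m_eq M M' -> tyM G' t M'.

Definition typ_equiv (t u : term) : Prop :=
  forall (G : tctx) (L : lty), tyL G t L <-> tyL G u L.

(* Typing is syntax directed up to the multiset equivalences [ty_eq], [m_eq]
   and [ctx_eq], so a derivation for C<t> contains derivations for t at the
   uses of the hole; replacing them gives compatibility, and invariance under
   ->w reduces to the root rules. For the m- and gcv-rules the substitution
   context S is commuted out one explicit substitution at a time, leaving
   (\x.t)u ~ t[x\u] and t[x\v] ~ t for x not free in t; the latter holds
   because the unused x forces v to be typed exactly with [n], which every
   abstraction has in the empty context. For the e-rule, a derivation of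
   W<<x>> gives the occurrence of x in the hole some multi type M; the argument
   u of the substitution is typed with the multi type of x plus [n], so its
   derivation splits into one of u : M, which types W<<u>> in place of x, and
   the rest. Reading the splitting backwards gives the converse. *)

From Stdlib Require Import List Arith Lia Bool Permutation Setoid Morphisms
  FunctionalExtensionality.
Import ListNotations.

Fixpoint ty_eq_refl (L : lty) : ty_eq L L :=
  match L with
  | TN => teq_n
  | TArr M L' =>
      teq_arr M M L' L'
        ((fix m_eq_refl (M : mty) : m_eq M M :=
            match M with
            | [] => meq_nil
            | L0 :: M' => meq_cons L0 L0 M' M' (ty_eq_refl L0) (m_eq_refl M')
            end) M)
        (ty_eq_refl L')
  end.

Lemma m_eq_refl (M : mty) : m_eq M M.
Proof. induction M; constructor; auto using ty_eq_refl. Qed.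

Scheme ty_eq_mut_ind := Induction for ty_eq Sort Prop
  with m_eq_mut_ind := Induction for m_eq Sort Prop.
Combined Scheme ty_m_eq_mut_ind from ty_eq_mut_ind, m_eq_mut_ind.

Lemma ty_m_eq_sym :
  (forall L L', ty_eq L L' -> ty_eq L' L) /\ (forall M M', m_eq M M' -> m_eq M' M).
Proof.
  apply ty_m_eq_mut_ind; intros; try solve [constructor; auto].
  eapply meq_trans; eauto.
Qed.

Lemma ty_eq_trans L1 L2 L3 : ty_eq L1 L2 -> ty_eq L2 L3 -> ty_eq L1 L3.
Proof.
  intros H; revert L3; induction H; intros L3 H3; inversion H3; subst; auto.
  constructor; eauto using meq_trans.
Qed.

#[export] Instance ty_eq_equiv : Equivalence ty_eq.
Proof. split; [exact ty_eq_refl | exact (proj1 ty_m_eq_sym) | exact ty_eq_trans]. Qed.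

#[export] Instance m_eq_equiv : Equivalence m_eq.
Proof. split; [exact m_eq_refl | exact (proj2 ty_m_eq_sym) | exact meq_trans]. Qed.

#[export] Instance ctx_eq_equiv : Equivalence ctx_eq.
Proof.
  split; intros G; unfold ctx_eq; [reflexivity | intros G' H x | intros G' G'' H H' x].
  - symmetry; apply H.
  - rewrite (H x); apply H'.
Qed.

#[export] Instance TArr_proper : Proper (m_eq ==> ty_eq ==> ty_eq) TArr.
Proof. intros M M' HM L L' HL; now constructor. Qed.

#[export] Instance cons_m_eq_proper : Proper (ty_eq ==> m_eq ==> m_eq) cons.
Proof. intros L L' HL M M' HM; now constructor. Qed.

#[export] Instance app_m_eq_proper : Proper (m_eq ==> m_eq ==> m_eq) (@app lty).
Proof.
  intros A A' HA B B' HB; transitivity (A' ++ B).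
  - induction HA; simpl;
      [reflexivity | now constructor | apply meq_swap | eapply meq_trans; eassumption].
  - clear HA; induction A'; simpl; [exact HB | apply meq_cons; [reflexivity | assumption]].
Qed.

Lemma m_eq_length M M' : m_eq M M' -> length M = length M'.
Proof. induction 1; simpl; congruence. Qed.

Lemma m_eq_nil_r M : m_eq M [] -> M = [].
Proof. intros H; apply m_eq_length in H; now destruct M. Qed.

Lemma Permutation_m_eq M M' : Permutation M M' -> m_eq M M'.
Proof.
  induction 1; [reflexivity | now constructor | apply meq_swap | eapply meq_trans; eassumption].
Qed.

#[export] Instance csum_proper : Proper (ctx_eq ==> ctx_eq ==> ctx_eq) csum.
Proof. intros G G' HG D D' HD x; unfold csum; now rewrite (HG x), (HD x). Qed.

#[export] Instance ctail_proper : Proper (ctx_eq ==> ctx_eq) ctail.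
Proof. intros G G' HG x; apply HG. Qed.

#[export] Instance csingle_proper : Proper (eq ==> m_eq ==> ctx_eq) csingle.
Proof. intros x ? <- M M' HM y; unfold csingle; now destruct (y =? x). Qed.

#[export] Instance tyL_proper : Proper (ctx_eq ==> eq ==> ty_eq ==> iff) tyL.
Proof.
  intros G G' HG t ? <- L L' HL; split; intros H; eapply ty_convL; eauto; now symmetry.
Qed.

#[export] Instance tyM_proper : Proper (ctx_eq ==> eq ==> m_eq ==> iff) tyM.
Proof.
  intros G G' HG t ? <- M M' HM; split; intros H; eapply ty_convM; eauto; now symmetry.
Qed.

Lemma tyL_conv_ctx G G' t L : tyL G t L -> ctx_eq G G' -> tyL G' t L.
Proof. intros H HG; now rewrite <- HG. Qed.

Lemma tyM_conv_ctx G G' t M : tyM G t M -> ctx_eq G G' -> tyM G' t M.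
Proof. intros H HG; now rewrite <- HG. Qed.

Lemma ty_es_meq G D t u L M : tyL G t L -> tyM D u M -> m_eq M (G 0 ++ [TN]) ->
  tyL (csum (ctail G) D) (ES t u) L.
Proof. intros Ht Hu HM; rewrite HM in Hu; now constructor. Qed.

Lemma csum_cempty_r G : csum G cempty = G.
Proof. apply functional_extensionality; intro; apply app_nil_r. Qed.

Lemma csum_assoc G D E : csum (csum G D) E = csum G (csum D E).
Proof. apply functional_extensionality; intro; symmetry; apply app_assoc. Qed.

Lemma csingle_app x A B : csingle x (A ++ B) = csum (csingle x A) (csingle x B).
Proof. apply functional_extensionality; intro y; unfold csum, csingle; now destruct (y =? x). Qed.

Lemma csingle_nil x : csingle x [] = cempty.
Proof. apply functional_extensionality; intro y; unfold csingle; now destruct (y =? x). Qed.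

Definition shift (k : nat) (G : tctx) : tctx := fun y => if y <? k then [] else G (y - k).

Lemma shift1_S G y : shift 1 G (S y) = G y.
Proof. unfold shift; simpl; now rewrite Nat.sub_0_r. Qed.

Lemma ctail_shift1 G : ctail (shift 1 G) = G.
Proof. apply functional_extensionality; apply shift1_S. Qed.

Lemma ctx_eq_of_Permutation G G' : (forall x, Permutation (G x) (G' x)) -> ctx_eq G G'.
Proof. intros H x; apply Permutation_m_eq, H. Qed.

Lemma Permutation_app_front {A} (a b R R' : list A) :
  Permutation R (a ++ R') -> Permutation (b ++ R) (a ++ b ++ R').
Proof.
  intros ->; rewrite !app_assoc; apply Permutation_app_tail, Permutation_app_comm.
Qed.

Lemma Permutation_app_nil_r' {A} (a : list A) : Permutation a (a ++ []).
Proof. now rewrite app_nil_r. Qed.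

Lemma Permutation_cancel_front {A} (a L R R' : list A) :
  Permutation R (a ++ R') -> Permutation L R' -> Permutation (a ++ L) R.
Proof. now intros -> ->. Qed.

Lemma Permutation_cancel_last {A} (a R R' : list A) :
  Permutation R (a ++ R') -> Permutation [] R' -> Permutation a R.
Proof. intros -> <-; apply Permutation_app_nil_r'. Qed.

(* [perm_front] solves [Permutation R (a ++ ?R')] when [a] is one of the
   concatenated blocks of [R], instantiating [?R'] with the other blocks. *)
Ltac perm_front :=
  match goal with
  | |- Permutation (?a ++ _) (?a ++ _) => apply Permutation_refl
  | |- Permutation ?a (?a ++ _) => apply Permutation_app_nil_r'
  | |- Permutation (?b ++ ?a) (?a ++ _) => apply Permutation_app_comm
  | |- Permutation (?b ++ _) (?a ++ _) => eapply Permutation_app_front; perm_front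
  end.

Ltac perm_solve :=
  repeat rewrite <- app_assoc; repeat rewrite app_nil_r; simpl;
  repeat rewrite <- app_assoc; repeat rewrite app_nil_r;
  match goal with
  | |- Permutation ?a ?a => apply Permutation_refl
  | |- Permutation (?a ++ _) _ => eapply Permutation_cancel_front; [perm_front | perm_solve]
  | |- Permutation ?a _ => eapply Permutation_cancel_last; [perm_front | perm_solve]
  end.

Ltac solve_ctx_perm :=
  apply ctx_eq_of_Permutation; intro;
  unfold csum, cempty, ctail, csingle; repeat rewrite shift1_S; simpl; perm_solve.

(** * Multi type derivations as lists of linear ones *)

Fixpoint csum_list (ps : list (tctx * lty)) : tctx :=
  match ps with [] => cempty | p :: ps => csum (fst p) (csum_list ps) end.

Definition derivable (t : term) (p : tctx * lty) : Prop := tyL (fst p) t (snd p).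

Lemma tyM_decompose G t M : tyM G t M ->
  exists ps, Forall (derivable t) ps /\ ctx_eq (csum_list ps) G /\ m_eq (map snd ps) M.
Proof.
  induction 1 as [t|G D t L M HL _ (ps & Hps & HG & HM)
                 |G G' t M M' _ (ps & Hps & HG & HM) HGG' HMM'].
  - exists []; repeat split; [constructor | reflexivity | constructor].
  - exists ((G, L) :: ps); repeat split; simpl; [now constructor | now rewrite HG | now rewrite HM].
  - exists ps; repeat split; [assumption | now rewrite HG | now rewrite HM].
Qed.

Lemma tyM_compose t ps : Forall (derivable t) ps -> tyM (csum_list ps) t (map snd ps).
Proof. induction 1; simpl; now constructor. Qed.

Lemma derivations_reorder A B : m_eq A B -> forall t ps, map snd ps = A ->
  Forall (derivable t) ps ->
  exists qs, Forall (derivable t) qs /\ ctx_eq (csum_list ps) (csum_list qs) /\ map snd qs = B.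
Proof.
  induction 1 as [|L L' M M' HL _ IH|L1 L2 M|M1 M2 M3 _ IH1 _ IH2]; intros t ps Hps Hder.
  - exists ps; repeat split; auto; reflexivity.
  - destruct ps as [|[G0 L0] ps]; simpl in Hps; try discriminate.
    injection Hps as -> Hps; apply Forall_cons_iff in Hder as [HL0 Hder'].
    destruct (IH t ps Hps Hder') as (qs & Hqs & HG & <-).
    exists ((G0, L') :: qs); repeat split; simpl.
    + constructor; [unfold derivable in *; simpl in *; now rewrite <- HL | exact Hqs].
    + now rewrite HG.
  - destruct ps as [|p1 [|p2 ps]]; simpl in Hps; try discriminate.
    injection Hps as <- <- <-; apply Forall_cons_iff in Hder as [? Hder'].
    apply Forall_cons_iff in Hder' as [? ?].
    exists (p2 :: p1 :: ps); repeat split; simpl; [now repeat constructor | solve_ctx_perm].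
  - destruct (IH1 t ps Hps Hder) as (qs & Hqs & HG & Hqs').
    destruct (IH2 t qs Hqs' Hqs) as (rs & Hrs & HG' & Hrs').
    exists rs; repeat split; auto; etransitivity; eassumption.
Qed.

Lemma csum_list_app ps qs : csum_list (ps ++ qs) = csum (csum_list ps) (csum_list qs).
Proof. induction ps; simpl; [reflexivity | now rewrite IHps, csum_assoc]. Qed.

Lemma tyM_app_inv G t M1 M2 : tyM G t (M1 ++ M2) ->
  exists G1 G2, tyM G1 t M1 /\ tyM G2 t M2 /\ ctx_eq (csum G1 G2) G.
Proof.
  intros H; apply tyM_decompose in H as (ps & Hps & HG & HM).
  destruct (derivations_reorder _ _ HM t ps eq_refl Hps) as (qs & Hqs & HG' & Hqs').
  apply map_eq_app in Hqs' as (qs1 & qs2 & -> & <- & <-).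
  apply Forall_app in Hqs as [Hqs1 Hqs2].
  exists (csum_list qs1), (csum_list qs2); repeat split; try now apply tyM_compose.
  now rewrite <- csum_list_app, <- HG'.
Qed.

Lemma tyM_app G1 G2 t M1 M2 :
  tyM G1 t M1 -> tyM G2 t M2 -> tyM (csum G1 G2) t (M1 ++ M2).
Proof.
  induction 1 as [|G D t L M HL _ IH|G G' t M M' _ IH HG HM]; intros H2; simpl.
  - exact H2.
  - rewrite csum_assoc; constructor; auto.
  - now rewrite <- HG, <- HM; apply IH.
Qed.

Lemma tyM_nil_inv G t : tyM G t [] -> ctx_eq G cempty.
Proof.
  intros H; apply tyM_decompose in H as (ps & _ & HG & HM).
  apply m_eq_nil_r, map_eq_nil in HM as ->; now symmetry.
Qed.

Lemma tyM_singleton G t L : tyL G t L -> tyM G t [L].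
Proof. intros H; rewrite <- (csum_cempty_r G); constructor; [exact H | constructor]. Qed.

Lemma tyM_singleton_inv G t L : tyM G t [L] -> tyL G t L.
Proof.
  intros H; apply tyM_decompose in H as (ps & Hps & HG & HM).
  destruct (derivations_reorder _ _ HM t ps eq_refl Hps) as (qs & Hqs & HG' & Hqs').
  destruct qs as [|[G0 L0] [|]]; simpl in Hqs'; try discriminate.
  injection Hqs' as ->; inversion Hqs as [|? ? HL0]; subst.
  simpl in HG'; rewrite csum_cempty_r in HG'.
  now rewrite <- HG, HG'.
Qed.

Lemma tyL_var_inv G x L : tyL G (Var x) L -> ctx_eq G (csingle x [L]).
Proof.
  remember (Var x) as t eqn:Et.
  induction 1 as [| | | | |G G' t L L' _ IH HG HL]; try discriminate.
  - injection Et as ->; reflexivity.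
  - now rewrite <- HG, IH, HL.
Qed.

Lemma tyL_lam_TN_inv G t : tyL G (Lam t) TN -> ctx_eq G cempty.
Proof.
  remember (Lam t) as s eqn:Es; remember TN as A eqn:EA.
  induction 1 as [| | | | |G G' s L L' _ IH HG HL]; try discriminate.
  - reflexivity.
  - subst; inversion HL; subst; now rewrite <- HG, IH.
Qed.

Lemma tyL_lam_arr_inv G t M L : tyL G (Lam t) (TArr M L) ->
  exists G', tyL G' t L /\ m_eq (G' 0) M /\ ctx_eq (ctail G') G.
Proof.
  intros H; remember (Lam t) as s eqn:Es; remember (TArr M L) as A eqn:EA.
  revert M L EA; induction H as [| |G s L H _| | |G G' s A A' _ IH HG HA];
    intros M0 L0 EA; try discriminate.
  - injection Es as ->; injection EA as <- <-; exists G; repeat split; auto; reflexivity.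
  - subst; inversion HA as [|M1 ? L1 ? HM HL1]; subst.
    destruct (IH eq_refl M1 L1 eq_refl) as (G'' & Ht & HM0 & HG'').
    exists G''; repeat split; [now rewrite <- HL1 | now rewrite HM0 | now rewrite HG''].
Qed.

Lemma tyL_app_inv G t u L : tyL G (App t u) L ->
  exists G1 D M, tyL G1 t (TArr M L) /\ tyM D u (M ++ [TN]) /\ ctx_eq (csum G1 D) G.
Proof.
  remember (App t u) as s eqn:Es.
  induction 1 as [| | |G D t' u' M L Ht Hu| |G G' s L L' _ IH HG HL]; try discriminate.
  - injection Es as -> ->; exists G, D, M; repeat split; auto; reflexivity.
  - destruct (IH Es) as (G1 & D & M & Ht & Hu & HG1).
    exists G1, D, M; repeat split; [now rewrite <- HL | exact Hu | now rewrite HG1].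
Qed.

Lemma tyL_es_inv G t u L : tyL G (ES t u) L ->
  exists G1 D, tyL G1 t L /\ tyM D u (G1 0 ++ [TN]) /\ ctx_eq (csum (ctail G1) D) G.
Proof.
  remember (ES t u) as s eqn:Es.
  induction 1 as [| | | |G D t' u' L Ht Hu|G G' s L L' _ IH HG HL]; try discriminate.
  - injection Es as -> ->; exists G, D; repeat split; auto; reflexivity.
  - destruct (IH Es) as (G1 & D & Ht & Hu & HG1).
    exists G1, D; repeat split; [now rewrite <- HL | exact Hu | now rewrite HG1].
Qed.


(** * Compatibility with contexts *)

Scheme tyL_mut_ind := Induction for tyL Sort Prop
  with tyM_mut_ind := Induction for tyM Sort Prop.
Combined Scheme ty_mut_ind from tyL_mut_ind, tyM_mut_ind.

Lemma ty_cplug_mono t u : (forall G L, tyL G t L -> tyL G u L) ->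
  (forall G s L, tyL G s L -> forall C, s = cplug C t -> tyL G (cplug C u) L) /\
  (forall G s M, tyM G s M -> forall C, s = cplug C t -> tyM G (cplug C u) M).
Proof.
  intros Htu; apply ty_mut_ind.
  - intros x L []; simpl; try discriminate; intros <-; apply Htu; constructor.
  - intros s []; simpl; try discriminate; intros E.
    + subst; apply Htu; constructor.
    + constructor.
  - intros G s L Hs IH []; simpl; try discriminate; intros E.
    + subst; apply Htu; constructor; auto.
    + injection E as ->; constructor; auto.
  - intros G D s s' M L Hs IH Hs' IH' []; simpl; try discriminate; intros E.
    + subst; apply Htu; econstructor; eauto.
    + injection E as -> ->; econstructor; eauto.
    + injection E as -> ->; econstructor; eauto.
  - intros G D s s' L Hs IH Hs' IH' []; simpl; try discriminate; intros E.
    + subst; apply Htu; econstructor; eauto.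
    + injection E as -> ->; econstructor; eauto.
    + injection E as -> ->; econstructor; eauto.
  - intros; econstructor; eauto.
  - intros; constructor.
  - intros; constructor; auto.
  - intros; econstructor; eauto.
Qed.

Lemma typ_equiv_cplug C t u : typ_equiv t u -> typ_equiv (cplug C t) (cplug C u).
Proof.
  intros Htu G L; split; intros H.
  - exact (proj1 (ty_cplug_mono t u (fun G L => proj1 (Htu G L))) _ _ _ H C eq_refl).
  - exact (proj1 (ty_cplug_mono u t (fun G L => proj2 (Htu G L))) _ _ _ H C eq_refl).
Qed.

Lemma typ_equiv_trans t u v : typ_equiv t u -> typ_equiv u v -> typ_equiv t v.
Proof. intros Htu Huv G L; now rewrite (Htu G L). Qed.

Lemma ren_ext_occurs t : forall f g,
  (forall i, occurs i t = true -> f i = g i) -> ren f t = ren g t.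
Proof.
  induction t as [n|t IH|t1 IH1 t2 IH2|t1 IH1 t2 IH2]; intros f g H; simpl in *.
  - f_equal; apply H, Nat.eqb_refl.
  - f_equal; apply IH; intros [|i] Hi; simpl; [reflexivity | f_equal; now apply H].
  - f_equal; [apply IH1 | apply IH2]; intros i Hi; apply H; rewrite Hi; auto using orb_true_r.
  - f_equal; [apply IH1 | apply IH2].
    + intros [|i] Hi; simpl; [reflexivity | f_equal; apply H; now rewrite Hi].
    + intros i Hi; apply H; rewrite Hi; apply orb_true_r.
Qed.

Lemma ren_ext t f g : (forall i, f i = g i) -> ren f t = ren g t.
Proof. intros H; apply ren_ext_occurs; auto. Qed.

Lemma ren_ren t : forall f g, ren f (ren g t) = ren (fun i => f (g i)) t.
Proof.
  induction t; intros f g; simpl; f_equal; auto;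
    rewrite ?IHt, ?IHt1; apply ren_ext; now intros [|i].
Qed.

Lemma ren_id t : forall f, (forall i, f i = i) -> ren f t = t.
Proof.
  induction t; intros f H; simpl; f_equal; auto;
    [apply IHt | apply IHt1]; intros [|i]; simpl; auto.
Qed.

Lemma lift_lift t a b : lift a (lift b t) = lift (b + a) t.
Proof. unfold lift; rewrite ren_ren; apply ren_ext; intros; lia. Qed.

Lemma lift_0 t : lift 0 t = t.
Proof. apply ren_id; intros; lia. Qed.

(* Typing along an injective renaming [r], given through a partial inverse [s]. *)
Definition partial_inv (r : nat -> nat) (s : nat -> option nat) : Prop :=
  (forall x, s (r x) = Some x) /\ (forall y x, s y = Some x -> r x = y).

Definition upinv (s : nat -> option nat) : nat -> option nat :=
  fun y => match y with 0 => Some 0 | S y' => option_map S (s y') end.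

Lemma partial_inv_up r s : partial_inv r s -> partial_inv (uprn r) (upinv s).
Proof.
  intros [Hsr Hrs]; split.
  - intros [|x]; simpl; now rewrite ?Hsr.
  - intros [|y] x E; simpl in E.
    + now injection E as <-.
    + destruct (s y) eqn:Hs; simpl in E; try discriminate.
      injection E as <-; simpl; f_equal; auto.
Qed.

Definition cpull (s : nat -> option nat) (G : tctx) : tctx :=
  fun y => match s y with Some x => G x | None => [] end.

Lemma cpull_csum s G D : cpull s (csum G D) = csum (cpull s G) (cpull s D).
Proof. apply functional_extensionality; intro y; unfold cpull, csum; now destruct (s y). Qed.

Lemma cpull_ctail s G : ctail (cpull (upinv s) G) = cpull s (ctail G).
Proof.
  apply functional_extensionality; intro y; unfold cpull, ctail; simpl; now destruct (s y).
Qed.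

Lemma cpull_cempty s : cpull s cempty = cempty.
Proof. apply functional_extensionality; intro y; unfold cpull; now destruct (s y). Qed.

Lemma cpull_csingle r s x M : partial_inv r s -> cpull s (csingle x M) = csingle (r x) M.
Proof.
  intros [Hsr Hrs]; apply functional_extensionality; intro y; unfold cpull, csingle.
  destruct (s y) as [z|] eqn:Hs.
  - apply Hrs in Hs as <-.
    destruct (Nat.eqb_spec z x) as [->|Hzx]; [now rewrite Nat.eqb_refl|].
    destruct (Nat.eqb_spec (r z) (r x)) as [E|]; [|reflexivity].
    apply (f_equal s) in E; rewrite !Hsr in E; congruence.
  - destruct (Nat.eqb_spec y (r x)) as [->|]; [|reflexivity].
    rewrite Hsr in Hs; discriminate.
Qed.

#[export] Instance cpull_proper s : Proper (ctx_eq ==> ctx_eq) (cpull s).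
Proof. intros G G' HG y; unfold cpull; destruct (s y); [apply HG | reflexivity]. Qed.

Lemma ty_ren :
  (forall G t L, tyL G t L -> forall r s, partial_inv r s -> tyL (cpull s G) (ren r t) L) /\
  (forall G t M, tyM G t M -> forall r s, partial_inv r s -> tyM (cpull s G) (ren r t) M).
Proof.
  apply ty_mut_ind; simpl.
  - intros x L r s Hrs; erewrite cpull_csingle by exact Hrs; constructor.
  - intros t r s _; rewrite cpull_cempty; constructor.
  - intros G t L _ IH r s Hrs; rewrite <- cpull_ctail.
    exact (ty_lam _ _ _ (IH _ _ (partial_inv_up r s Hrs))).
  - intros G D t u M L _ IHt _ IHu r s Hrs; rewrite cpull_csum; econstructor; eauto.
  - intros G D t u L _ IHt _ IHu r s Hrs; rewrite cpull_csum, <- cpull_ctail.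
    exact (ty_es _ _ _ _ _ (IHt _ _ (partial_inv_up r s Hrs)) (IHu r s Hrs)).
  - intros G G' t L L' _ IH HG HL r s Hrs; now rewrite <- HG, <- HL; apply IH.
  - intros t r s _; rewrite cpull_cempty; constructor.
  - intros G D t L M _ IHt _ IHM r s Hrs; rewrite cpull_csum; constructor; auto.
  - intros G G' t M M' _ IH HG HM r s Hrs; now rewrite <- HG, <- HM; apply IH.
Qed.

Lemma cpull_ren r s G : partial_inv r s -> (fun x => cpull s G (r x)) = G.
Proof. intros [Hsr _]; apply functional_extensionality; intro x; unfold cpull; now rewrite Hsr. Qed.

Ltac invert_ren :=
  match goal with
  | E : _ = ren _ ?t |- _ => destruct t; simpl in E; try discriminate
  end.

Lemma ty_ren_inv :
  (forall G t' L, tyL G t' L -> forall r s t, t' = ren r t -> partial_inv r s ->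
     tyL (fun x => G (r x)) t L /\ forall y, s y = None -> G y = []) /\
  (forall G t' M, tyM G t' M -> forall r s t, t' = ren r t -> partial_inv r s ->
     tyM (fun x => G (r x)) t M /\ forall y, s y = None -> G y = []).
Proof.
  apply ty_mut_ind.
  - intros x L r s t E Hrs; invert_ren; injection E as ->.
    rewrite <- (cpull_csingle r s n [L] Hrs), (cpull_ren r s _ Hrs).
    split; [constructor | intros y Hy; unfold cpull; now rewrite Hy].
  - intros b r s t E Hrs; invert_ren; split; [constructor | reflexivity].
  - intros G b L _ IH r s t E Hrs; invert_ren; injection E as Eb.
    destruct (IH _ _ _ Eb (partial_inv_up r s Hrs)) as [Ht Hsupp].
    split; [exact (ty_lam _ _ _ Ht) | intros y Hy; apply Hsupp; simpl; now rewrite Hy].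
  - intros G D a b M L _ IHa _ IHb r s t E Hrs; invert_ren; injection E as Ea Eb.
    destruct (IHa _ _ _ Ea Hrs) as [Ha Ha'], (IHb _ _ _ Eb Hrs) as [Hb Hb'].
    split; [econstructor; eauto | intros y Hy; unfold csum; now rewrite Ha', Hb'].
  - intros G D a b L _ IHa _ IHb r s t E Hrs; invert_ren; injection E as Ea Eb.
    destruct (IHa _ _ _ Ea (partial_inv_up r s Hrs)) as [Ha Ha'], (IHb _ _ _ Eb Hrs) as [Hb Hb'].
    split; [exact (ty_es _ _ _ _ _ Ha Hb) |].
    intros y Hy; unfold csum, ctail; rewrite Ha', Hb'; simpl; now rewrite ?Hy.
  - intros G G' t' L L' _ IH HG HL r s t E Hrs.
    destruct (IH _ _ _ E Hrs) as [Ht Hsupp]; split.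
    + eapply ty_convL; [exact Ht | intro x; apply HG | exact HL].
    + intros y Hy; apply m_eq_nil_r; rewrite <- (HG y), Hsupp by exact Hy; reflexivity.
  - intros t' r s t E Hrs; split; [constructor | reflexivity].
  - intros G D t' L M _ IHa _ IHb r s t E Hrs.
    destruct (IHa _ _ _ E Hrs) as [Ha Ha'], (IHb _ _ _ E Hrs) as [Hb Hb'].
    split; [constructor; auto | intros y Hy; unfold csum; now rewrite Ha', Hb'].
  - intros G G' t' M M' _ IH HG HM r s t E Hrs.
    destruct (IH _ _ _ E Hrs) as [Ht Hsupp]; split.
    + eapply ty_convM; [exact Ht | intro x; apply HG | exact HM].
    + intros y Hy; apply m_eq_nil_r; rewrite <- (HG y), Hsupp by exact Hy; reflexivity.
Qed.

Definition unlift_idx (k : nat) : nat -> option nat :=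
  fun y => if y <? k then None else Some (y - k).

Lemma partial_inv_lift k : partial_inv (fun i => i + k) (unlift_idx k).
Proof.
  split; intros y; unfold unlift_idx.
  - destruct (Nat.ltb_spec (y + k) k); [lia | f_equal; lia].
  - intros x; destruct (Nat.ltb_spec y k); intros E; [discriminate | injection E as <-; lia].
Qed.

Lemma cpull_unlift_idx k G : cpull (unlift_idx k) G = shift k G.
Proof.
  apply functional_extensionality; intro y; unfold cpull, unlift_idx, shift; now destruct (y <? k).
Qed.

Lemma tyL_lift k G t L : tyL G t L -> tyL (shift k G) (lift k t) L.
Proof.
  intros H; rewrite <- cpull_unlift_idx; exact (proj1 ty_ren _ _ _ H _ _ (partial_inv_lift k)).
Qed.

Lemma tyM_lift k G t M : tyM G t M -> tyM (shift k G) (lift k t) M.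
Proof.
  intros H; rewrite <- cpull_unlift_idx; exact (proj2 ty_ren _ _ _ H _ _ (partial_inv_lift k)).
Qed.

Lemma ctail_as_add1 G : (fun x => G (x + 1)) = ctail G.
Proof. apply functional_extensionality; intro x; unfold ctail; f_equal; lia. Qed.

Lemma tyL_lift1_inv G t L : tyL G (lift 1 t) L -> tyL (ctail G) t L /\ G 0 = [].
Proof.
  intros H; destruct (proj1 ty_ren_inv _ _ _ H _ _ t eq_refl (partial_inv_lift 1)) as [Ht Hsupp].
  rewrite ctail_as_add1 in Ht; split; [exact Ht | now apply Hsupp].
Qed.

Lemma tyM_lift1_inv G t M : tyM G (lift 1 t) M -> tyM (ctail G) t M /\ G 0 = [].
Proof.
  intros H; destruct (proj2 ty_ren_inv _ _ _ H _ _ t eq_refl (partial_inv_lift 1)) as [Ht Hsupp].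
  rewrite ctail_as_add1 in Ht; split; [exact Ht | now apply Hsupp].
Qed.

(** * The multiplicative rule *)

Lemma typ_equiv_beta t u : typ_equiv (App (Lam t) u) (ES t u).
Proof.
  intros G L; split; intros H.
  - apply tyL_app_inv in H as (G1 & D & M & Ht & Hu & HG).
    apply tyL_lam_arr_inv in Ht as (G' & Ht & HM & HG').
    rewrite <- HM in Hu; rewrite <- HG, <- HG'; now constructor.
  - apply tyL_es_inv in H as (G1 & D & Ht & Hu & HG).
    rewrite <- HG; eapply ty_app; [apply ty_lam, Ht | exact Hu].
Qed.

Lemma typ_equiv_app_es t w u : typ_equiv (App (ES t w) u) (ES (App t (lift 1 u)) w).
Proof.
  intros G L; split; intros H.
  - apply tyL_app_inv in H as (G1 & D & M & Htw & Hu & HG).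
    apply tyL_es_inv in Htw as (G2 & D2 & Ht & Hw & HG1).
    rewrite <- HG, <- HG1; eapply tyL_conv_ctx.
    + apply ty_es_meq with (M := G2 0 ++ [TN]);
        [eapply ty_app; [exact Ht | apply tyM_lift, Hu] | exact Hw |].
      unfold csum, shift; simpl; now rewrite app_nil_r.
    + solve_ctx_perm.
  - apply tyL_es_inv in H as (G1 & D1 & Happ & Hw & HG).
    apply tyL_app_inv in Happ as (G2 & D2 & M & Ht & Hu & HG1).
    apply tyM_lift1_inv in Hu as [Hu HD2].
    assert (HG10 : m_eq (G1 0) (G2 0)).
    { rewrite <- (HG1 0); unfold csum; now rewrite HD2, app_nil_r. }
    rewrite <- HG, <- HG1; eapply tyL_conv_ctx.
    + eapply ty_app; [| exact Hu].
      apply ty_es_meq with (M := G1 0 ++ [TN]); [exact Ht | exact Hw | now rewrite HG10].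
    + solve_ctx_perm.
Qed.

Lemma typ_equiv_root_m Sc t u :
  typ_equiv (App (splug Sc (Lam t)) u) (splug Sc (ES t (lift (length Sc) u))).
Proof.
  revert t u; induction Sc as [|w Sc IH]; intros t u; simpl.
  - rewrite lift_0; apply typ_equiv_beta.
  - eapply typ_equiv_trans; [apply typ_equiv_app_es|].
    pose proof (typ_equiv_cplug (CESL CHole w) _ _ (IH t (lift 1 u))) as Hw.
    simpl in Hw; now rewrite lift_lift in Hw.
Qed.

(** * The garbage collection rule *)

Lemma typ_equiv_gc_lam t b : typ_equiv (ES (lift 1 t) (Lam b)) t.
Proof.
  intros G L; split; intros H.
  - apply tyL_es_inv in H as (G1 & D & Ht & Hb & HG).
    apply tyL_lift1_inv in Ht as [Ht HG10]; rewrite HG10 in Hb.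
    apply tyM_singleton_inv, tyL_lam_TN_inv in Hb.
    now rewrite <- HG, Hb, csum_cempty_r.
  - apply tyL_lift with (k := 1) in H.
    rewrite <- (ctail_shift1 G), <- (csum_cempty_r (ctail (shift 1 G))).
    eapply ty_es; [exact H | apply tyM_singleton, ty_axlam].
Qed.

(* Since [x] does not occur in [t], the substitution [t[x\w[y\u]]] uses its
   argument exactly once, at type [n]. *)
Lemma typ_equiv_es_es t w u :
  typ_equiv (ES (lift 1 t) (ES w u)) (ES (ES (lift 1 (lift 1 t)) w) u).
Proof.
  intros G L; split; intros H.
  - apply tyL_es_inv in H as (G1 & D1 & Ht & Hwu & HG).
    apply tyL_lift1_inv in Ht as [Ht HG10]; rewrite HG10 in Hwu.
    apply tyM_singleton_inv, tyL_es_inv in Hwu as (G2 & D2 & Hw & Hu & HG1).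
    rewrite <- HG, <- HG1; eapply tyL_conv_ctx.
    + eapply ty_es; [eapply ty_es; [apply tyL_lift, tyL_lift, Ht | apply tyM_singleton, Hw] |].
      exact Hu.
    + solve_ctx_perm.
  - apply tyL_es_inv in H as (G1 & D1 & Htw & Hu & HG).
    apply tyL_es_inv in Htw as (G2 & D2 & Ht & Hw & HG1).
    apply tyL_lift1_inv in Ht as [Ht HG20]; apply tyL_lift1_inv in Ht as [Ht HG21].
    rewrite HG20 in Hw; apply tyM_singleton_inv in Hw.
    assert (HG10 : m_eq (G1 0) (D2 0)) by (rewrite <- (HG1 0); unfold csum; now rewrite HG21).
    assert (Hwu : tyL (csum (ctail D2) D1) (ES w u) TN)
      by (apply ty_es_meq with (M := G1 0 ++ [TN]); [exact Hw | exact Hu | now rewrite HG10]).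
    rewrite <- HG, <- HG1; eapply tyL_conv_ctx.
    + eapply ty_es; [apply tyL_lift, Ht | apply tyM_singleton, Hwu].
    + solve_ctx_perm.
Qed.

Lemma typ_equiv_gcv Sc t b :
  typ_equiv (ES (lift 1 t) (splug Sc (Lam b))) (splug Sc (lift (length Sc) t)).
Proof.
  revert t; induction Sc as [|w Sc IH]; intros t; simpl.
  - rewrite lift_0; apply typ_equiv_gc_lam.
  - eapply typ_equiv_trans; [apply typ_equiv_es_es|].
    pose proof (typ_equiv_cplug (CESL CHole w) _ _ (IH (lift 1 t))) as Hw.
    simpl in Hw; now rewrite (lift_lift t (length Sc) 1) in Hw.
Qed.

(** * The exponential rule *)

Lemma tyM_subst_of_tyL x u a b :
  (forall G L, tyL G a L -> exists G0 M, ctx_eq G (csum G0 (csingle x M)) /\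
     forall D, tyM D u M -> tyL (csum G0 D) b L) ->
  forall G N, tyM G a N -> exists G0 M, ctx_eq G (csum G0 (csingle x M)) /\
     forall D, tyM D u M -> tyM (csum G0 D) b N.
Proof.
  intros HL G N H; remember a as a' eqn:Ea in H.
  induction H as [a'|G1 G2 a' L N Ha _ IH|G G' a' N N' _ IH HG HN]; subst a'.
  - exists cempty, []; rewrite csingle_nil; split; [reflexivity |].
    intros D HD; rewrite (tyM_nil_inv _ _ HD); constructor.
  - destruct (HL _ _ Ha) as (G0a & Ma & HGa & Fa), (IH eq_refl) as (G0b & Mb & HGb & Fb).
    exists (csum G0a G0b), (Ma ++ Mb); split.
    + rewrite csingle_app, HGa, HGb; solve_ctx_perm.
    + intros D HD; apply tyM_app_inv in HD as (Da & Db & HDa & HDb & HD).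
      rewrite <- HD; eapply tyM_conv_ctx;
        [apply tym_cons; [apply Fa, HDa | apply Fb, HDb] | solve_ctx_perm].
  - destruct (IH eq_refl) as (G0 & M & HG0 & F).
    exists G0, M; split; [now rewrite <- HG | intros D HD; rewrite <- HN; auto].
Qed.

Lemma tyM_antisubst_of_tyL x u a b :
  (forall G L, tyL G b L -> exists G0 D M, tyM D u M /\ ctx_eq G (csum G0 D) /\
     tyL (csum G0 (csingle x M)) a L) ->
  forall G N, tyM G b N -> exists G0 D M, tyM D u M /\ ctx_eq G (csum G0 D) /\
     tyM (csum G0 (csingle x M)) a N.
Proof.
  intros HL G N H; remember b as b' eqn:Eb in H.
  induction H as [b'|G1 G2 b' L N Hb _ IH|G G' b' N N' _ IH HG HN]; subst b'.
  - exists cempty, cempty, []; rewrite csingle_nil.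
    repeat split; [constructor | reflexivity | constructor].
  - destruct (HL _ _ Hb) as (G0a & Da & Ma & HDa & HGa & Fa),
      (IH eq_refl) as (G0b & Db & Mb & HDb & HGb & Fb).
    exists (csum G0a G0b), (csum Da Db), (Ma ++ Mb); repeat split.
    + now apply tyM_app.
    + rewrite HGa, HGb; solve_ctx_perm.
    + rewrite csingle_app; eapply tyM_conv_ctx;
        [apply tym_cons; [exact Fa | exact Fb] | solve_ctx_perm].
  - destruct (IH eq_refl) as (G0 & D & M & HD & HG0 & F).
    exists G0, D, M; repeat split; [exact HD | now rewrite <- HG | now rewrite <- HN].
Qed.

Lemma wplug_var_subst W : forall x u G L,
  tyL G (wplug W (Var (x + wdepth W))) L ->
  exists G0 M, ctx_eq G (csum G0 (csingle x M)) /\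
    forall D, tyM D u M -> tyL (csum G0 D) (wplug W (lift (wdepth W) u)) L.
Proof.
  induction W as [|W IH t|t W IH|t W IH|W IH w]; intros x u G L H; simpl in *.
  - rewrite Nat.add_0_r in H; apply tyL_var_inv in H.
    exists cempty, [L]; split; [exact H |].
    intros D HD; rewrite lift_0; now apply tyM_singleton_inv.
  - apply tyL_app_inv in H as (G1 & D1 & M1 & H1 & H2 & HG).
    destruct (IH x u _ _ H1) as (G0 & M & HG1 & F).
    exists (csum G0 D1), M; split; [rewrite <- HG, HG1; solve_ctx_perm |].
    intros D HD; eapply tyL_conv_ctx; [eapply ty_app; [apply F, HD | exact H2] | solve_ctx_perm].
  - apply tyL_app_inv in H as (G1 & D1 & M1 & H1 & H2 & HG).
    destruct (tyM_subst_of_tyL x u _ _ (IH x u) _ _ H2) as (G0 & M & HD1 & F).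
    exists (csum G1 G0), M; split; [rewrite <- HG, HD1; solve_ctx_perm |].
    intros D HD; eapply tyL_conv_ctx; [eapply ty_app; [exact H1 | apply F, HD] | solve_ctx_perm].
  - apply tyL_es_inv in H as (G1 & D1 & H1 & H2 & HG).
    destruct (tyM_subst_of_tyL x u _ _ (IH x u) _ _ H2) as (G0 & M & HD1 & F).
    exists (csum (ctail G1) G0), M; split; [rewrite <- HG, HD1; solve_ctx_perm |].
    intros D HD; eapply tyL_conv_ctx; [eapply ty_es; [exact H1 | apply F, HD] | solve_ctx_perm].
  - apply tyL_es_inv in H as (G1 & D1 & H1 & H2 & HG).
    rewrite <- Nat.add_succ_comm in H1.
    destruct (IH (S x) (lift 1 u) _ _ H1) as (G0 & M & HG1 & F).
    exists (csum (ctail G0) D1), M; split; [rewrite <- HG, HG1; solve_ctx_perm |].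
    intros D HD; specialize (F _ (tyM_lift 1 _ _ _ HD)); rewrite lift_lift in F.
    eapply tyL_conv_ctx.
    + apply ty_es_meq with (M := G1 0 ++ [TN]); [exact F | exact H2 |].
      rewrite (HG1 0); unfold csum, csingle, shift; simpl; now rewrite !app_nil_r.
    + solve_ctx_perm.
Qed.

Lemma wplug_var_antisubst W : forall x u G L,
  tyL G (wplug W (lift (wdepth W) u)) L ->
  exists G0 D M, tyM D u M /\ ctx_eq G (csum G0 D) /\
    tyL (csum G0 (csingle x M)) (wplug W (Var (x + wdepth W))) L.
Proof.
  induction W as [|W IH t|t W IH|t W IH|W IH w]; intros x u G L H; simpl in *.
  - rewrite lift_0 in H; exists cempty, G, [L]; repeat split.
    + now apply tyM_singleton.
    + reflexivity.
    + rewrite Nat.add_0_r; apply ty_ax.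
  - apply tyL_app_inv in H as (G1 & D1 & M1 & H1 & H2 & HG).
    destruct (IH x u _ _ H1) as (G0 & D & M & HD & HG1 & F).
    exists (csum G0 D1), D, M; repeat split; [exact HD | rewrite <- HG, HG1; solve_ctx_perm |].
    eapply tyL_conv_ctx; [eapply ty_app; [exact F | exact H2] | solve_ctx_perm].
  - apply tyL_app_inv in H as (G1 & D1 & M1 & H1 & H2 & HG).
    destruct (tyM_antisubst_of_tyL x u _ _ (IH x u) _ _ H2) as (G0 & D & M & HD & HD1 & F).
    exists (csum G1 G0), D, M; repeat split; [exact HD | rewrite <- HG, HD1; solve_ctx_perm |].
    eapply tyL_conv_ctx; [eapply ty_app; [exact H1 | exact F] | solve_ctx_perm].
  - apply tyL_es_inv in H as (G1 & D1 & H1 & H2 & HG).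
    destruct (tyM_antisubst_of_tyL x u _ _ (IH x u) _ _ H2) as (G0 & D & M & HD & HD1 & F).
    exists (csum (ctail G1) G0), D, M.
    repeat split; [exact HD | rewrite <- HG, HD1; solve_ctx_perm |].
    eapply tyL_conv_ctx; [eapply ty_es; [exact H1 | exact F] | solve_ctx_perm].
  - apply tyL_es_inv in H as (G1 & D1 & H1 & H2 & HG).
    replace (lift (S (wdepth W)) u) with (lift (wdepth W) (lift 1 u)) in H1 by apply lift_lift.
    destruct (IH (S x) (lift 1 u) _ _ H1) as (G0 & D & M & HD & HG1 & F).
    apply tyM_lift1_inv in HD as [HD HD0].
    exists (csum (ctail G0) D1), (ctail D), M.
    repeat split; [exact HD | rewrite <- HG, HG1; solve_ctx_perm |].
    rewrite <- Nat.add_succ_comm.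
    eapply tyL_conv_ctx.
    + apply ty_es_meq with (M := G1 0 ++ [TN]); [exact F | exact H2 |].
      rewrite (HG1 0); unfold csum, csingle; simpl; now rewrite HD0, !app_nil_r.
    + solve_ctx_perm.
Qed.

Lemma typ_equiv_root_e W u :
  typ_equiv (ES (wplug W (Var (wdepth W))) u) (ES (wplug W (lift (S (wdepth W)) u)) u).
Proof.
  intros G L; split; intros H.
  - apply tyL_es_inv in H as (G1 & Du & H1 & Hu & HG).
    destruct (wplug_var_subst W 0 (lift 1 u) _ _ H1) as (G0 & M & HG1 & F).
    assert (Hu' : tyM Du u ((G0 0 ++ [TN]) ++ M)).
    { rewrite (HG1 0) in Hu; unfold csum, csingle in Hu; simpl in Hu.
      rewrite <- app_assoc, (Permutation_m_eq _ _ (Permutation_app_comm [TN] M)), app_assoc.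
      exact Hu. }
    apply tyM_app_inv in Hu' as (Da & Db & Ha & Hb & HD).
    specialize (F _ (tyM_lift 1 _ _ _ Hb)); rewrite lift_lift in F.
    rewrite <- HG, HG1, <- HD; eapply tyL_conv_ctx.
    + apply ty_es_meq with (M := G0 0 ++ [TN]); [exact F | exact Ha |].
      unfold csum, shift; simpl; now rewrite app_nil_r.
    + solve_ctx_perm.
  - apply tyL_es_inv in H as (G1 & Du & H1 & Hu & HG).
    replace (lift (S (wdepth W)) u) with (lift (wdepth W) (lift 1 u)) in H1 by apply lift_lift.
    destruct (wplug_var_antisubst W 0 (lift 1 u) _ _ H1) as (G0 & D & M & HD & HG1 & F).
    apply tyM_lift1_inv in HD as [HD HD0].
    rewrite <- HG, HG1; eapply tyL_conv_ctx.
    + apply ty_es_meq with (M := (G1 0 ++ [TN]) ++ M);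
        [exact F | exact (tyM_app _ _ _ _ _ Hu HD) |].
      rewrite (HG1 0); unfold csum, csingle; simpl; rewrite HD0, app_nil_r, <- !app_assoc.
      now rewrite (Permutation_m_eq _ _ (Permutation_app_comm [TN] M)).
    + solve_ctx_perm.
Qed.

Lemma typ_equiv_root t u : root t u -> typ_equiv t u.
Proof.
  intros [Sc t' u'|W u'|t' Sc v [b ->] Hocc].
  - apply typ_equiv_root_m.
  - apply typ_equiv_root_e.
  - assert (Hlift : lift 1 (ren pred t') = t').
    { unfold lift; rewrite ren_ren, (ren_ext_occurs t' _ (fun i => i)); [now apply ren_id |].
      intros [|i] Hi; [congruence | simpl; lia]. }
    assert (Hres : ren (fun i => pred i + length Sc) t' = lift (length Sc) (ren pred t'))
      by (unfold lift; now rewrite ren_ren).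
    rewrite Hres, <- Hlift at 1; apply typ_equiv_gcv.
Qed.

Fixpoint cctx_of_wctx (W : wctx) : cctx :=
  match W with
  | WHole => CHole
  | WAppL W t => CAppL (cctx_of_wctx W) t
  | WAppR t W => CAppR t (cctx_of_wctx W)
  | WESR t W => CESR t (cctx_of_wctx W)
  | WESL W u => CESL (cctx_of_wctx W) u
  end.

Lemma wplug_cplug W s : wplug W s = cplug (cctx_of_wctx W) s.
Proof. induction W; simpl; f_equal; auto. Qed.

Lemma typ_equiv_wstep t u : wstep t u -> typ_equiv t u.
Proof.
  intros [W t' u' Hroot]; rewrite !wplug_cplug.
  now apply typ_equiv_cplug, typ_equiv_root.
Qed.

Theorem theorem6p8 :
  (forall t u : term, wstep t u -> typ_equiv t u) /\
  (forall t u : term, typ_equiv t u ->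
     forall C : cctx, typ_equiv (cplug C t) (cplug C u)).
Proof.
  split.
  - exact typ_equiv_wstep.
  - intros t u Htu C; now apply typ_equiv_cplug.
Qed.
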